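(* Let $D$ be a Newton diagram in $2$ variables whose support $K$ contains all $(a,b)\in\mathbb N_0^2$ with $a+b<k$ and at least one point $(a,b)$ with $a+b=k$. Then there exists a Newton diagram $\tilde D$ with support $\tilde K$ such that $K\subset\tilde K$, $\tilde D|_K=D|_K$, $\tilde K$ contains all $(a,b)\in\mathbb N_0^2$ with $a+b=k$, every point of $\tilde K\setminus K$ satisfies $a+b=k$, and $SC(\tilde D)\le SC(D)$.
   Context: For $m\in\mathbb Z^n$ write $|m|=m_1+\dots+m_n$; $e_1,\dots,e_n$ is the standard basis. A Newton diagram in $n$ variables is a function $D\colon\mathbb Z^n\to\{0,P,N\}$ ($P,N$ formal symbols) whose support $K=D^{-1}(\{P,N\})$ is a finite nonempty subset of $\mathbb N_0^n$. For $a\in\mathbb Z^n$ let $E(a)=\{a,a-e_1,\dots,a-e_n\}$; $E(a)$ is a node of $D$ if the image $D(E(a))$ equals $\{P\}$, $\{N\}$, $\{0,P\}$ or $\{0,N\}$. For $n=2$: a node $E(a)$ is an interior node if no point of $E(a)$ has $D$-value $0$, an edge node if exactly one does, a vertex node if exactly two do; a vertex node is a bottom node if its two $0$-points are $a-e_1$ and $a-e_2$. The weighted surface count is $SC(D)=(\#\text{interior nodes})+\tfrac12\big((\#\text{edge nodes})+(\#\text{vertex nodes})-(\#\text{bottom nodes})\big)$. *)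

From Stdlib Require Import ZArith QArith List Lia.
Import ListNotations.
Open Scope Z_scope.

Inductive val : Type := Zero | Pv | Nv.

Definition val_eqb (u v : val) : bool :=
  match u, v with
  | Zero, Zero | Pv, Pv | Nv, Nv => true
  | _, _ => false
  end.

(* A Newton diagram in 2 variables: a function Z^2 -> {0,P,N} whose support
   is a finite nonempty subset of N_0^2.  Finiteness is witnessed by a bound
   [bnd]: the support lies in [0,bnd)^2.  (The counts below do not depend on
   the particular bound chosen.) *)
Record NewtonDiagram2 : Type := {
  nd_fun :> Z * Z -> val;
  nd_bnd : nat;
  nd_supp_box : forall p, nd_fun p <> Zero ->
      0 <= fst p < Z.of_nat nd_bnd /\ 0 <= snd p < Z.of_nat nd_bnd;
  nd_nonempty : exists p, nd_fun p <> Zero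
}.

(* the values of D on E(a) = {a, a - e1, a - e2} *)
Definition v0 (D : Z * Z -> val) (a : Z * Z) := D a.
Definition v1 (D : Z * Z -> val) (a : Z * Z) := D (fst a - 1, snd a).
Definition v2 (D : Z * Z -> val) (a : Z * Z) := D (fst a, snd a - 1).

Definition has_val (D : Z * Z -> val) (a : Z * Z) (v : val) : bool :=
  val_eqb (v0 D a) v || val_eqb (v1 D a) v || val_eqb (v2 D a) v.

(* E(a) is a node iff D(E(a)) is one of {P}, {N}, {0,P}, {0,N}, i.e. the
   image contains P or N but not both. *)
Definition is_node (D : Z * Z -> val) (a : Z * Z) : bool :=
  (has_val D a Pv || has_val D a Nv) && negb (has_val D a Pv && has_val D a Nv).

Definition nzeros (D : Z * Z -> val) (a : Z * Z) : nat :=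
  (if val_eqb (v0 D a) Zero then 1 else 0) +
  (if val_eqb (v1 D a) Zero then 1 else 0) +
  (if val_eqb (v2 D a) Zero then 1 else 0).

Definition interior_node D a : bool := is_node D a && Nat.eqb (nzeros D a) 0.
Definition edge_node D a : bool := is_node D a && Nat.eqb (nzeros D a) 1.
Definition vertex_node D a : bool := is_node D a && Nat.eqb (nzeros D a) 2.
Definition bottom_node D a : bool :=
  vertex_node D a && val_eqb (v1 D a) Zero && val_eqb (v2 D a) Zero.

(* all a in [0,B]^2; every node of a diagram with support in [0,B)^2 has
   a in [0,B]^2, since some point of E(a) lies in the support. *)
Definition box (B : nat) : list (Z * Z) :=
  list_prod (map Z.of_nat (seq 0 (S B))) (map Z.of_nat (seq 0 (S B))).

Definition count_nodes (f : (Z * Z -> val) -> Z * Z -> bool)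
  (D : NewtonDiagram2) : nat :=
  length (filter (f (nd_fun D)) (box (nd_bnd D))).

Definition SC (D : NewtonDiagram2) : Q :=
  inject_Z (Z.of_nat (count_nodes interior_node D)) +
  (1 # 2) * (inject_Z (Z.of_nat (count_nodes edge_node D))
             + inject_Z (Z.of_nat (count_nodes vertex_node D))
             - inject_Z (Z.of_nat (count_nodes bottom_node D))).

(* Count every node with twice its weight in SC, so that
   2·SC(D) is the integer sum, over all a, of a local [node_weight] of the
   triple (D a, D (a - e1), D (a - e2)).  Let the diagonal segment be the
   points (i, k - i), 0 <= i <= k.  Changing D only on the segment changes
   only the weights of the nodes at the segment points and at the points
   (i, k + 1 - i) just above it; their total weight is a "chain cost" of the
   diagonal values y 0, ..., y k, each term involving at most two
   consecutive y's.  The holes (segment points where D is zero) form runs.  Filling a run with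
   alternating signs, in one of the two possible phases, costs on average
   no more than leaving it empty, and strictly less when the run touches an
   end of the segment; since not every point is a hole (hk), integrality
   lets one of the two phases do no worse. *)

From Stdlib Require Import ZArith QArith List Lia Permutation.
Import ListNotations.
Open Scope Z_scope.

(* Twice the contribution to SC of the set E(a) when D takes the values
   u, v, w at a, a - e1, a - e2: interior nodes count 2, edge nodes and
   non-bottom vertex nodes count 1, everything else 0. *)
Definition node_weight (u v w : val) : Z :=
  let has_P := val_eqb u Pv || val_eqb v Pv || val_eqb w Pv in
  let has_N := val_eqb u Nv || val_eqb v Nv || val_eqb w Nv in
  let zeros := ((if val_eqb u Zero then 1 else 0) + (if val_eqb v Zero then 1 else 0)
                + (if val_eqb w Zero then 1 else 0))%nat in
  if (has_P || has_N) && negb (has_P && has_N) then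
    match zeros with
    | 0%nat => 2
    | 1%nat => 1
    | 2%nat => if val_eqb v Zero && val_eqb w Zero then 0 else 1
    | _ => 0
    end
  else 0.

(* All statements about [node_weight] below are finite checks over the
   3^3 value triples. *)
Ltac val_cases :=
  intros; repeat match goal with v : val |- _ => destruct v end;
  cbn; try lia; try congruence.

(* Lower neighbours of opposite signs: E(a) contains both P and N. *)
Lemma node_weight_mixed t v w :
  v <> Zero -> w <> Zero -> v <> w -> node_weight t v w = 0.
Proof. val_cases. Qed.

(* Both lower neighbours zero: a bottom node, or no node at all. *)
Lemma node_weight_bottom t : node_weight t Zero Zero = 0.
Proof. val_cases. Qed.

Lemma average_top c c' :
  node_weight Pv c c' + node_weight Nv c c' <= 2 * node_weight Zero c c'.
Proof. val_cases. Qed.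

Lemma average_top_boundary c c' :
  (c = Zero /\ c' <> Zero) \/ (c <> Zero /\ c' = Zero) ->
  node_weight Pv c c' + node_weight Nv c c' <= 2 * node_weight Zero c c' - 1.
Proof. val_cases; intuition congruence. Qed.

Lemma average_lower_left t c : c <> Zero ->
  node_weight t Pv c + node_weight t Nv c <= 2 * node_weight t Zero c.
Proof. val_cases. Qed.

Lemma average_lower_left_any t c :
  node_weight t Pv c + node_weight t Nv c <= 2 * node_weight t Zero c + 2.
Proof. val_cases. Qed.

Lemma average_lower_right t c : c <> Zero ->
  node_weight t c Pv + node_weight t c Nv <= 2 * node_weight t c Zero.
Proof. val_cases. Qed.

Lemma average_lower_right_any t c :
  node_weight t c Pv + node_weight t c Nv <= 2 * node_weight t c Zero + 2.
Proof. val_cases. Qed.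

Fixpoint sumZ {A} (g : A -> Z) (l : list A) : Z :=
  match l with
  | [] => 0
  | a :: l' => g a + sumZ g l'
  end.

Lemma sumZ_app {A} (g : A -> Z) l1 l2 : sumZ g (l1 ++ l2) = sumZ g l1 + sumZ g l2.
Proof. induction l1; cbn; lia. Qed.

Lemma sumZ_map {A B} (g : B -> Z) (f : A -> B) l :
  sumZ g (map f l) = sumZ (fun a => g (f a)) l.
Proof. induction l; cbn; lia. Qed.

Lemma sumZ_ext_in {A} (f g : A -> Z) l :
  (forall a, In a l -> f a = g a) -> sumZ f l = sumZ g l.
Proof. induction l; cbn; intros H; [reflexivity|]. rewrite H, IHl; auto. Qed.

Lemma sumZ_minus {A} (f g : A -> Z) l :
  sumZ (fun a => f a - g a) l = sumZ f l - sumZ g l.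
Proof. induction l; cbn; lia. Qed.

Lemma sumZ_perm {A} (g : A -> Z) l l' : Permutation l l' -> sumZ g l = sumZ g l'.
Proof. induction 1; cbn; lia. Qed.

Lemma sumZ_restrict {A} (eq_dec : forall x y : A, {x = y} + {x <> y})
  (g : A -> Z) l s :
  NoDup l -> NoDup s -> incl s l -> (forall a, In a l -> ~ In a s -> g a = 0) ->
  sumZ g l = sumZ g s.
Proof.
  intros nd_l nd_s sub g_zero.
  set (outside := fun a => if in_dec eq_dec a s then false else true).
  assert (outside_spec : forall a, outside a = true <-> ~ In a s).
  { intros a. unfold outside. destruct (in_dec eq_dec a s); intuition congruence. }
  assert (split_l : Permutation l (s ++ filter outside l)).
  { apply NoDup_Permutation; auto.
    - apply NoDup_app; auto using NoDup_filter.
      intros a in_s in_r. apply filter_In in in_r as [_ out]. apply outside_spec in out. auto.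
    - intros a. rewrite in_app_iff, filter_In, outside_spec.
      destruct (in_dec eq_dec a s); intuition. }
  rewrite (sumZ_perm g _ _ split_l), sumZ_app.
  enough (sumZ g (filter outside l) = 0) by lia.
  assert (vanish : forall a, In a (filter outside l) -> g a = 0).
  { intros a in_r. apply filter_In in in_r as [in_l out]. apply outside_spec in out. auto. }
  clear - vanish. induction (filter outside l) as [|a r IH]; cbn in *; [reflexivity|].
  rewrite vanish, IH; auto.
Qed.

Lemma count_as_sum {A} (f : A -> bool) l :
  Z.of_nat (length (filter f l)) = sumZ (fun a => Z.b2z (f a)) l.
Proof. induction l as [|a l IH]; cbn; [reflexivity|]. destruct (f a); cbn [length Z.b2z]; lia. Qed.

(* Along the diagonal, y i is the value at
   the i-th segment point, t i the value at the point above it, and cl i,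
   cr i the values at its two lower neighbours.  [chain_cost] is the total
   weight of the nodes at the points above (i = 0..n, whose lower
   neighbours are segment points i - 1 and i) and at the segment points
   (i < n); the segment point "before the first one" is zero. *)
Definition prev (y : nat -> val) (i : nat) : val :=
  match i with O => Zero | S j => y j end.

Definition chain_cost (t cl cr y : nat -> val) (n : nat) : Z :=
  sumZ (fun i => node_weight (t i) (prev y i) (y i)) (seq 0 (S n))
  + sumZ (fun i => node_weight (y i) (cl i) (cr i)) (seq 0 n).

Lemma chain_cost_succ t cl cr y n :
  chain_cost t cl cr y (S n) =
  chain_cost t cl cr y n + node_weight (t (S n)) (y n) (y (S n))
  + node_weight (y n) (cl n) (cr n).
Proof.
  unfold chain_cost. rewrite (seq_S (S n)), (seq_S n), !sumZ_app. cbn. lia.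
Qed.

Lemma chain_cost_ext t cl cr y y' n :
  (forall i, (i <= n)%nat -> y i = y' i) -> chain_cost t cl cr y n = chain_cost t cl cr y' n.
Proof.
  intros agree. unfold chain_cost. f_equal; apply sumZ_ext_in; intros i Hi;
    apply in_seq in Hi; rewrite (agree i) by lia; [|reflexivity].
  destruct i as [|j]; cbn [prev]; [reflexivity|]. rewrite (agree j) by lia. reflexivity.
Qed.

Definition override (y : nat -> val) (n : nat) (v : val) : nat -> val :=
  fun i => if (i =? n)%nat then v else y i.

Lemma cost_extend t cl cr y m v :
  chain_cost t cl cr (override y (S m) v) (S m) =
  chain_cost t cl cr y m + node_weight (t (S m)) (y m) v + node_weight (y m) (cl m) (cr m).
Proof.
  assert (before : forall i, (i <= m)%nat -> override y (S m) v i = y i).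
  { intros i Hi. unfold override. destruct (Nat.eqb_spec i (S m)); [lia|reflexivity]. }
  rewrite chain_cost_succ, (chain_cost_ext _ _ _ _ y m before), before by lia.
  unfold override. rewrite Nat.eqb_refl. reflexivity.
Qed.

Section DiagonalFilling.

Variables (k : nat) (t cl cr d : nat -> val).
Hypotheses (cl_first : cl 0%nat = Zero) (cr_first : cr 0%nat <> Zero)
           (cl_last : cl k <> Zero) (cr_last : cr k = Zero)
           (d_somewhere : exists j, (j <= k)%nat /\ d j <> Zero).

Lemma k_pos : k <> 0%nat.
Proof. intros ->. contradiction. Qed.

Definition hole (i : nat) : Prop := (i <= k)%nat /\ d i = Zero.

Lemma hole_dec i : {hole i} + {~ hole i}.
Proof.
  unfold hole. destruct (le_lt_dec i k) as [le|lt]; [|right; lia].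
  destruct (d i); [left; auto | right; intros [_ ?]; discriminate ..].
Qed.

Definition admissible (y : nat -> val) (n : nat) : Prop :=
  forall i, (i <= n)%nat -> (hole i -> y i <> Zero) /\ (~ hole i -> y i = d i).

Lemma admissible_extend_hole y m v :
  admissible y m -> hole (S m) -> v <> Zero -> admissible (override y (S m) v) (S m).
Proof.
  intros adm hS nz i Hi. unfold override.
  destruct (Nat.eqb_spec i (S m)) as [->|ne]; [tauto | apply adm; lia].
Qed.

Lemma admissible_extend_fixed y m :
  admissible y m -> ~ hole (S m) -> admissible (override y (S m) (d (S m))) (S m).
Proof.
  intros adm nhS i Hi. unfold override.
  destruct (Nat.eqb_spec i (S m)) as [->|ne]; [tauto | apply adm; lia].
Qed.

Definition fixed_ok (n : nat) : Prop :=
  exists y, admissible y n /\ chain_cost t cl cr y n <= chain_cost t cl cr d n.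

Definition hole_ok (n : nat) (s : Z) : Prop :=
  exists yP yN, admissible yP n /\ admissible yN n /\ yP n = Pv /\ yN n = Nv /\
    chain_cost t cl cr yP n + chain_cost t cl cr yN n <= 2 * chain_cost t cl cr d n + s.

Lemma hole_ok_weaken n s s' : s <= s' -> hole_ok n s -> hole_ok n s'.
Proof.
  intros le_s (yP & yN & adP & adN & eP & eN & bound).
  exists yP, yN. do 4 (split; [assumption|]). lia.
Qed.

(* Averaging gain at the node of segment point m: one unit at each end of
   the segment, where exactly one lower neighbour is zero. *)
Definition end_gain (m : nat) : Z := (if (m =? 0)%nat then 1 else 0) + (if (m =? k)%nat then 1 else 0).

Lemma top_pair_bound m :
  node_weight Pv (cl m) (cr m) + node_weight Nv (cl m) (cr m)
  <= 2 * node_weight Zero (cl m) (cr m) - end_gain m.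
Proof.
  pose proof k_pos. unfold end_gain.
  destruct (Nat.eqb_spec m 0) as [e0|ne0], (Nat.eqb_spec m k) as [ek|nek]; try lia.
  - subst m. pose proof (average_top_boundary (cl 0) (cr 0) (or_introl (conj cl_first cr_first))). lia.
  - subst m. pose proof (average_top_boundary (cl k) (cr k) (or_intror (conj cl_last cr_last))). lia.
  - pose proof (average_top (cl m) (cr m)). lia.
Qed.

Lemma base_fixed : ~ hole 0 -> fixed_ok 0.
Proof. intros nh0. exists d. split; [|lia]. intros i Hi. assert (i = 0%nat) by lia. subst. tauto. Qed.

Lemma base_hole : hole 0 -> hole_ok 0 2.
Proof.
  intros h0. exists (fun _ => Pv), (fun _ => Nv).
  assert (adm : forall v, v <> Zero -> admissible (fun _ => v) 0).
  { intros v nz i Hi. assert (i = 0%nat) by lia. subst. tauto. }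
  do 2 (split; [apply adm; discriminate|]). do 2 (split; [reflexivity|]).
  unfold chain_cost. cbn [seq sumZ prev]. destruct h0 as [_ ->].
  pose proof (average_lower_right_any (t 0%nat) Zero). lia.
Qed.

(* A hole follows a hole: extend the two fillings with swapped phases, so
   that consecutive holes always receive opposite signs. *)
Lemma step_hole_hole m s :
  hole m -> hole (S m) -> hole_ok m s -> hole_ok (S m) (s - end_gain m).
Proof.
  intros [_ dm] hS (yP & yN & adP & adN & eP & eN & bound).
  exists (override yN (S m) Pv), (override yP (S m) Nv).
  do 2 (split; [apply admissible_extend_hole; auto; discriminate|]).
  unfold override. rewrite Nat.eqb_refl. do 2 (split; [reflexivity|]).
  fold (override yN (S m) Pv) (override yP (S m) Nv).
  destruct hS as [_ dSm].
  rewrite !cost_extend, chain_cost_succ, eP, eN, dm, dSm, node_weight_bottom,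
    (node_weight_mixed _ Nv Pv), (node_weight_mixed _ Pv Nv) by discriminate.
  pose proof (top_pair_bound m). lia.
Qed.

Lemma step_fixed_hole m :
  ~ hole m -> hole (S m) -> fixed_ok m -> hole_ok (S m) 0.
Proof.
  intros nhm hS (y & ad & bound).
  assert (ym : y m = d m) by (apply ad; auto).
  assert (dm : d m <> Zero) by (intros z; apply nhm; split; [destruct hS; lia | exact z]).
  exists (override y (S m) Pv), (override y (S m) Nv).
  do 2 (split; [apply admissible_extend_hole; auto; discriminate|]).
  unfold override. rewrite Nat.eqb_refl. do 2 (split; [reflexivity|]).
  fold (override y (S m) Pv) (override y (S m) Nv).
  destruct hS as [_ dSm].
  rewrite !cost_extend, chain_cost_succ, ym, dSm.
  pose proof (average_lower_right (t (S m)) (d m) dm). lia.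
Qed.

Lemma step_fixed_fixed m :
  ~ hole m -> ~ hole (S m) -> fixed_ok m -> fixed_ok (S m).
Proof.
  intros nhm nhS (y & ad & bound).
  assert (ym : y m = d m) by (apply ad; auto).
  exists (override y (S m) (d (S m))). split; [apply admissible_extend_fixed; auto|].
  rewrite cost_extend, chain_cost_succ, ym. lia.
Qed.

(* A run of holes ends at a fixed point (or past the segment end): both
   fillings are extended by that value, and if their costs sum to at most
   twice the cost of d plus one, the cheaper one is no worse than d. *)
Lemma step_hole_fixed m s :
  hole m -> ~ hole (S m) -> hole_ok m s ->
  s - end_gain m + (if (m =? k)%nat then 2 else 0) <= 1 -> fixed_ok (S m).
Proof.
  intros [mk dm] nhS (yP & yN & adP & adN & eP & eN & bound) slack.
  assert (lower : node_weight (t (S m)) Pv (d (S m)) + node_weight (t (S m)) Nv (d (S m))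
                  <= 2 * node_weight (t (S m)) Zero (d (S m)) + (if (m =? k)%nat then 2 else 0)).
  { destruct (Nat.eqb_spec m k) as [_|nek].
    - apply average_lower_left_any.
    - assert (nz : d (S m) <> Zero) by (intros z; apply nhS; split; [lia | exact z]).
      pose proof (average_lower_left (t (S m)) (d (S m)) nz). lia. }
  assert (sum_bound : chain_cost t cl cr (override yP (S m) (d (S m))) (S m)
                      + chain_cost t cl cr (override yN (S m) (d (S m))) (S m)
                      <= 2 * chain_cost t cl cr d (S m) + 1).
  { rewrite !cost_extend, chain_cost_succ, eP, eN, dm. pose proof (top_pair_bound m). lia. }
  destruct (Z.le_gt_cases (chain_cost t cl cr (override yP (S m) (d (S m))) (S m))
                          (chain_cost t cl cr d (S m))).
  - exists (override yP (S m) (d (S m))). split; [apply admissible_extend_fixed|]; auto.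
  - exists (override yN (S m) (d (S m))). split; [apply admissible_extend_fixed|]; auto. lia.
Qed.

Lemma filling_invariant n : (n <= S k)%nat ->
  (~ hole n -> fixed_ok n) /\
  (hole n -> hole_ok n (if (n =? 0)%nat then 2 else 1) /\
             ((exists j, (j < n)%nat /\ ~ hole j) -> hole_ok n 0)).
Proof.
  pose proof k_pos.
  induction n as [|m IH]; intros Hn.
  { split; [exact base_fixed|]. intros h0. split; [exact (base_hole h0)|].
    intros (j & Hj & _). lia. }
  destruct (IH ltac:(lia)) as [IH_fixed IH_hole]; clear IH.
  destruct (hole_dec m) as [hm|nhm], (hole_dec (S m)) as [hS|nhS].
  - destruct (IH_hole hm) as [run_ok fixed_before].
    assert (m <> k) by (destruct hS; lia).
    split; [contradiction|intros _; split].
    + apply (hole_ok_weaken _ ((if (m =? 0)%nat then 2 else 1) - end_gain m)).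
      * unfold end_gain. destruct (Nat.eqb_spec m 0), (Nat.eqb_spec m k); cbn; lia.
      * apply step_hole_hole; auto.
    + intros (j & Hj & nhj).
      assert (j <> m) by (intros ->; contradiction).
      apply (hole_ok_weaken _ (0 - end_gain m)).
      * unfold end_gain. destruct (Nat.eqb_spec m 0), (Nat.eqb_spec m k); lia.
      * apply step_hole_hole; auto. apply fixed_before. exists j. split; [lia | exact nhj].
  - destruct (IH_hole hm) as [run_ok fixed_before].
    split; [intros _|contradiction].
    destruct (Nat.eqb_spec m k) as [->|nek].
    + (* the run reaches the end of the segment, so it cannot start at 0 *)
      destruct d_somewhere as (j & Hj & dj).
      apply (step_hole_fixed k 0); auto.
      * apply fixed_before. exists j. split.
        -- destruct (Nat.eq_dec j k) as [->|]; [destruct hm; contradiction | lia].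
        -- intros [_ z]. contradiction.
      * unfold end_gain. rewrite Nat.eqb_refl. destruct (Nat.eqb_spec k 0); lia.
    + apply (step_hole_fixed m _ hm nhS run_ok).
      unfold end_gain. destruct (Nat.eqb_spec m 0), (Nat.eqb_spec m k); lia.
  - pose proof (step_fixed_hole m nhm hS (IH_fixed nhm)) as run_ok.
    split; [contradiction|intros _].
    split; [apply (hole_ok_weaken _ 0); auto; cbn; lia | auto].
  - split; [intros _; apply step_fixed_fixed; auto | contradiction].
Qed.

Lemma diagonal_filling : exists y,
  (forall i, (i <= k)%nat -> y i <> Zero /\ (d i <> Zero -> y i = d i)) /\
  y (S k) = d (S k) /\ chain_cost t cl cr y (S k) <= chain_cost t cl cr d (S k).
Proof.
  assert (nhk : ~ hole (S k)) by (intros [? _]; lia).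
  destruct (proj1 (filling_invariant (S k) (le_n _)) nhk) as (y & adm & cost_le).
  exists y. split; [|split; [apply (adm (S k)); auto | exact cost_le]].
  intros i Hi. destruct (hole_dec i) as [hi|nhi].
  - split; [apply (adm i); auto; lia | intros nz; destruct hi; contradiction].
  - assert (yi : y i = d i) by (apply (adm i); auto; lia).
    split; [rewrite yi; intros z; apply nhi; split; auto | auto].
Qed.

End DiagonalFilling.

Definition diag (k i : nat) : Z * Z := (Z.of_nat i, Z.of_nat k - Z.of_nat i).
Definition above (k i : nat) : Z * Z := (Z.of_nat i, Z.of_nat k + 1 - Z.of_nat i).
Definition sub_e1 (a : Z * Z) : Z * Z := (fst a - 1, snd a).
Definition sub_e2 (a : Z * Z) : Z * Z := (fst a, snd a - 1).

Ltac point_eq := unfold diag, above, sub_e1, sub_e2; cbn [fst snd]; f_equal; lia.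

Lemma sub_e2_above k i : sub_e2 (above k i) = diag k i.
Proof. point_eq. Qed.

Lemma sub_e1_above k i : sub_e1 (above k (S i)) = diag k i.
Proof. point_eq. Qed.

Definition weight (F : Z * Z -> val) (a : Z * Z) : Z :=
  node_weight (F a) (F (sub_e1 a)) (F (sub_e2 a)).

(* The points a whose E(a) meets the diagonal segment. *)
Definition strip (k : nat) : list (Z * Z) :=
  map (above k) (seq 0 (S (S k))) ++ map (diag k) (seq 0 (S k)).

Lemma in_strip k a :
  In a (strip k) <-> (exists i, (i <= S k)%nat /\ a = above k i) \/
                     (exists i, (i <= k)%nat /\ a = diag k i).
Proof.
  unfold strip. rewrite in_app_iff. split.
  - intros [H|H]; apply in_map_iff in H as (i & <- & Hi); apply in_seq in Hi;
      [left|right]; exists i; split; [lia|reflexivity| lia|reflexivity].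
  - intros [(i & Hi & ->)|(i & Hi & ->)]; [left|right];
      apply in_map_iff; exists i; split; [reflexivity|apply in_seq; lia|reflexivity|apply in_seq; lia].
Qed.

Lemma NoDup_strip k : NoDup (strip k).
Proof.
  apply NoDup_app.
  - apply FinFun.Injective_map_NoDup; [intros i j e; injection e; lia | apply seq_NoDup].
  - apply FinFun.Injective_map_NoDup; [intros i j e; injection e; lia | apply seq_NoDup].
  - intros a in_above in_diag. apply in_map_iff in in_above as (i & <- & _).
    apply in_map_iff in in_diag as (j & e & _). injection e. lia.
Qed.

Lemma strip_weight_chain F k t cl cr y :
  F (sub_e1 (above k 0)) = Zero ->
  (forall i, (i <= S k)%nat -> F (above k i) = t i /\ F (diag k i) = y i) ->
  (forall i, (i <= k)%nat -> F (sub_e1 (diag k i)) = cl i /\ F (sub_e2 (diag k i)) = cr i) ->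
  sumZ (weight F) (strip k) = chain_cost t cl cr y (S k).
Proof.
  intros corner on_rows lower. unfold strip, chain_cost.
  rewrite sumZ_app, !sumZ_map. f_equal; apply sumZ_ext_in; intros i Hi; apply in_seq in Hi.
  - unfold weight. rewrite sub_e2_above.
    destruct (on_rows i ltac:(lia)) as [-> ->]. f_equal.
    destruct i as [|j]; cbn [prev]; [exact corner|].
    rewrite sub_e1_above. apply on_rows. lia.
  - unfold weight. destruct (on_rows i ltac:(lia)) as [_ ->].
    destruct (lower i ltac:(lia)) as [-> ->]. reflexivity.
Qed.

Lemma in_box B p : In p (box B) <-> 0 <= fst p <= Z.of_nat B /\ 0 <= snd p <= Z.of_nat B.
Proof.
  destruct p as [x z]. unfold box. rewrite in_prod_iff, !in_map_iff. cbn [fst snd].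
  split.
  - intros [(i & <- & Hi) (j & <- & Hj)]. apply in_seq in Hi, Hj. lia.
  - intros [Hx Hz]. split; [exists (Z.to_nat x) | exists (Z.to_nat z)]; rewrite in_seq; split; lia.
Qed.

Lemma NoDup_list_prod {A B} (l1 : list A) (l2 : list B) :
  NoDup l1 -> NoDup l2 -> NoDup (list_prod l1 l2).
Proof.
  induction 1 as [|a l1 a_new nd1 IH]; intros nd2; cbn; [constructor|].
  apply NoDup_app; auto.
  - apply FinFun.Injective_map_NoDup; auto. intros x y e; injection e; auto.
  - intros p in_row in_rest. apply in_map_iff in in_row as (y & <- & _).
    apply in_prod_iff in in_rest as [? _]. contradiction.
Qed.

Lemma NoDup_box B : NoDup (box B).
Proof.
  unfold box. apply NoDup_list_prod;
    (apply FinFun.Injective_map_NoDup; [intros i j; lia | apply seq_NoDup]).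
Qed.

Definition total_weight (F : Z * Z -> val) (B : nat) : Z := sumZ (weight F) (box B).

Lemma node_counts_weight (F : Z * Z -> val) a :
  2 * Z.b2z (interior_node F a) + Z.b2z (edge_node F a) + Z.b2z (vertex_node F a)
  - Z.b2z (bottom_node F a) = weight F a.
Proof.
  unfold weight, sub_e1, sub_e2, bottom_node, interior_node, edge_node, vertex_node,
    is_node, nzeros, has_val, v0, v1, v2.
  destruct (F a), (F (fst a - 1, snd a)), (F (fst a, snd a - 1)); reflexivity.
Qed.

Lemma SC_total_weight (D : NewtonDiagram2) :
  Qeq (SC D) ((1 # 2) * inject_Z (total_weight D (nd_bnd D))).
Proof.
  assert (counts : total_weight D (nd_bnd D) =
    2 * Z.of_nat (count_nodes interior_node D) + Z.of_nat (count_nodes edge_node D)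
    + Z.of_nat (count_nodes vertex_node D) - Z.of_nat (count_nodes bottom_node D)).
  { unfold count_nodes, total_weight. rewrite !count_as_sum.
    induction (box (nd_bnd D)) as [|a l IH]; cbn [sumZ]; [reflexivity|].
    rewrite <- node_counts_weight. lia. }
  rewrite counts. unfold SC.
  generalize (Z.of_nat (count_nodes interior_node D)) (Z.of_nat (count_nodes edge_node D))
    (Z.of_nat (count_nodes vertex_node D)) (Z.of_nat (count_nodes bottom_node D)).
  intros i e v b. unfold Z.sub. rewrite !inject_Z_plus, inject_Z_opp, inject_Z_mult.
  change (inject_Z 2) with (2 # 1). ring.
Qed.

Lemma SC_le_of_total_weight (D1 D2 : NewtonDiagram2) :
  total_weight D1 (nd_bnd D1) <= total_weight D2 (nd_bnd D2) -> Qle (SC D1) (SC D2).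
Proof.
  intros le. rewrite (SC_total_weight D1), (SC_total_weight D2).
  apply Qmult_le_l; [reflexivity|]. now rewrite <- Zle_Qle.
Qed.

Definition point_eq_dec (p q : Z * Z) : {p = q} + {p <> q}.
Proof. decide equality; apply Z.eq_dec. Defined.

Lemma nd_zero_outside (D : NewtonDiagram2) p :
  fst p < 0 \/ snd p < 0 \/ Z.of_nat (nd_bnd D) <= fst p \/ Z.of_nat (nd_bnd D) <= snd p ->
  D p = Zero.
Proof.
  intros out. destruct (D p) eqn:Dp; [reflexivity| |];
    pose proof (nd_supp_box D p ltac:(congruence)); lia.
Qed.

(* Enlarging the box does not change the total weight of a diagram:
   outside the box all three points of E(a) lie outside the support. *)
Lemma total_weight_enlarge (D : NewtonDiagram2) B :
  (nd_bnd D <= B)%nat -> total_weight D (nd_bnd D) = total_weight D B.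
Proof.
  intros le. symmetry. apply (sumZ_restrict point_eq_dec); try apply NoDup_box.
  - intros p. rewrite !in_box. lia.
  - intros [x z] _ out. rewrite in_box in out. cbn [fst snd] in out.
    unfold weight, sub_e1, sub_e2. cbn [fst snd].
    rewrite !nd_zero_outside by (cbn [fst snd]; lia). apply node_weight_bottom.
Qed.

Lemma strip_covers k a i : (i <= k)%nat ->
  a = diag k i \/ sub_e1 a = diag k i \/ sub_e2 a = diag k i -> In a (strip k).
Proof.
  intros Hi hit. apply in_strip. destruct a as [x z].
  destruct hit as [e|[e|e]]; unfold sub_e1, sub_e2, diag in e; cbn [fst snd] in e;
    injection e as ex ez.
  - right. exists i. split; [lia | point_eq].
  - left. exists (S i). split; [lia | point_eq].
  - left. exists i. split; [lia | point_eq].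
Qed.

Lemma total_weight_local_change k (F G : Z * Z -> val) B :
  (S k <= B)%nat ->
  (forall p, (forall i, (i <= k)%nat -> p <> diag k i) -> F p = G p) ->
  total_weight G B - total_weight F B = sumZ (weight G) (strip k) - sumZ (weight F) (strip k).
Proof.
  intros le agree. unfold total_weight. rewrite <- !sumZ_minus.
  apply (sumZ_restrict point_eq_dec); [apply NoDup_box | apply NoDup_strip | |].
  - intros p in_s. apply in_strip in in_s. rewrite in_box.
    destruct in_s as [(i & Hi & ->)|(i & Hi & ->)]; cbn; lia.
  - intros a _ off_strip. unfold weight.
    rewrite !agree; [lia | intros i Hi e; apply off_strip, (strip_covers k a i Hi); tauto ..].
Qed.

Definition on_diag (k : nat) (p : Z * Z) : bool :=
  (fst p + snd p =? Z.of_nat k) && (0 <=? fst p) && (fst p <=? Z.of_nat k).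

Lemma on_diag_spec k p : on_diag k p = true <-> exists i, (i <= k)%nat /\ p = diag k i.
Proof.
  unfold on_diag. rewrite !andb_true_iff, Z.eqb_eq, !Z.leb_le. destruct p as [x z]. cbn [fst snd].
  split.
  - intros [[sum lo] hi]. exists (Z.to_nat x). split; [lia | point_eq].
  - intros (i & Hi & e). injection e as -> ->. lia.
Qed.

Definition fill_diag (D : Z * Z -> val) (k : nat) (y : nat -> val) (p : Z * Z) : val :=
  if on_diag k p then y (Z.to_nat (fst p)) else D p.

Lemma fill_diag_cases D k y p :
  (exists i, (i <= k)%nat /\ p = diag k i /\ fill_diag D k y p = y i) \/
  ((forall i, (i <= k)%nat -> p <> diag k i) /\ fill_diag D k y p = D p).
Proof.
  unfold fill_diag. destruct (on_diag k p) eqn:E.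
  - left. apply on_diag_spec in E as (i & Hi & ->). exists i.
    do 2 (split; [auto|]). unfold diag. cbn [fst]. now rewrite Nat2Z.id.
  - right. split; [|reflexivity]. intros i Hi ->.
    assert (on_diag k (diag k i) = true) by (apply on_diag_spec; eauto). congruence.
Qed.

Lemma fill_diag_off D k y p :
  (forall i, (i <= k)%nat -> p <> diag k i) -> fill_diag D k y p = D p.
Proof.
  intros off. destruct (fill_diag_cases D k y p) as [(i & Hi & e & _)|[_ ->]]; [|reflexivity].
  exfalso. exact (off i Hi e).
Qed.

Lemma off_segment k p :
  fst p < 0 \/ Z.of_nat k < fst p \/ fst p + snd p <> Z.of_nat k ->
  forall i, (i <= k)%nat -> p <> diag k i.
Proof. intros off i Hi ->. unfold diag in off. cbn [fst snd] in off. lia. Qed.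

Lemma fill_diag_extends (D : Z * Z -> val) k y :
  (forall i, (i <= k)%nat -> D (diag k i) <> Zero -> y i = D (diag k i)) ->
  forall p, D p <> Zero -> fill_diag D k y p = D p.
Proof.
  intros agree p Dp. destruct (fill_diag_cases D k y p) as [(i & Hi & -> & ->)|[_ ->]]; auto.
Qed.

Lemma fill_diag_covers (D : Z * Z -> val) k y :
  (forall i, (i <= k)%nat -> y i <> Zero) ->
  forall a b : nat, (a + b = k)%nat -> fill_diag D k y (Z.of_nat a, Z.of_nat b) <> Zero.
Proof.
  intros y_nz a b Hab. replace (Z.of_nat a, Z.of_nat b) with (diag k a) by point_eq.
  destruct (fill_diag_cases D k y (diag k a)) as [(i & Hi & e & ->)|[off _]].
  - apply y_nz. exact Hi.
  - exfalso. apply (off a); [lia | reflexivity].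
Qed.

Lemma fill_diag_new_on_diag (D : Z * Z -> val) k y p :
  fill_diag D k y p <> Zero -> D p = Zero -> fst p + snd p = Z.of_nat k.
Proof.
  intros nz Dp. destruct (fill_diag_cases D k y p) as [(i & Hi & -> & _)|[_ e]].
  - unfold diag. cbn [fst snd]. lia.
  - congruence.
Qed.

Lemma fill_diag_diagram (D : NewtonDiagram2) k y :
  (forall i, (i <= k)%nat -> y i <> Zero) ->
  exists Dt : NewtonDiagram2,
    nd_fun Dt = fill_diag D k y /\ nd_bnd Dt = (nd_bnd D + k + 1)%nat.
Proof.
  intros y_nz.
  unshelve eexists (Build_NewtonDiagram2 (fill_diag D k y) (nd_bnd D + k + 1) _ _);
    [| | split; reflexivity].
  - intros p nz. destruct (fill_diag_cases D k y p) as [(i & Hi & -> & _)|[_ e]].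
    + unfold diag. cbn [fst snd]. lia.
    + rewrite e in nz. pose proof (nd_supp_box D p nz). lia.
  - exists (Z.of_nat 0, Z.of_nat k). apply (fill_diag_covers D k y y_nz). lia.
Qed.

Lemma diagonal_fill_exists k (D : NewtonDiagram2) :
  k <> 0%nat ->
  (forall a b : nat, (a + b < k)%nat -> D (Z.of_nat a, Z.of_nat b) <> Zero) ->
  (exists a b : nat, (a + b = k)%nat /\ D (Z.of_nat a, Z.of_nat b) <> Zero) ->
  exists y,
    (forall i, (i <= k)%nat -> y i <> Zero /\ (D (diag k i) <> Zero -> y i = D (diag k i))) /\
    sumZ (weight (fill_diag D k y)) (strip k) <= sumZ (weight D) (strip k).
Proof.
  intros k_pos hlow hk.
  set (t := fun i => D (above k i)). set (d := fun i => D (diag k i)).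
  set (cl := fun i => D (sub_e1 (diag k i))). set (cr := fun i => D (sub_e2 (diag k i))).
  (* end conditions at (-1, k), (0, k - 1), (k - 1, 0), (k, -1), then hk *)
  destruct (diagonal_filling k t cl cr d) as (y & y_ok & y_last & y_cost).
  - apply nd_zero_outside. cbn. lia.
  - unfold cr. replace (sub_e2 (diag k 0)) with (Z.of_nat 0, Z.of_nat (k - 1)) by point_eq.
    apply hlow. lia.
  - unfold cl. replace (sub_e1 (diag k k)) with (Z.of_nat (k - 1), Z.of_nat 0) by point_eq.
    apply hlow. lia.
  - apply nd_zero_outside. cbn. lia.
  - destruct hk as (a & b & Hab & Dab). exists a. split; [lia|].
    unfold d. replace (diag k a) with (Z.of_nat a, Z.of_nat b) by point_eq. exact Dab.
  - exists y. split; [exact y_ok|].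
    assert (off_row : forall i, fill_diag D k y (above k i) = t i)
      by (intros i; apply fill_diag_off, off_segment; cbn; lia).
    assert (off_lower : forall i, fill_diag D k y (sub_e1 (diag k i)) = cl i /\
                                  fill_diag D k y (sub_e2 (diag k i)) = cr i)
      by (intros i; split; apply fill_diag_off, off_segment; cbn; lia).
    rewrite (strip_weight_chain (fill_diag D k y) k t cl cr y),
            (strip_weight_chain D k t cl cr d); auto.
    + apply nd_zero_outside. cbn. lia.
    + rewrite fill_diag_off; [apply nd_zero_outside | apply off_segment]; cbn; lia.
    + intros i Hi. split; [apply off_row|].
      destruct (Nat.eq_dec i (S k)) as [->|ne].
      * rewrite y_last. apply fill_diag_off, off_segment. cbn. lia.
      * destruct (fill_diag_cases D k y (diag k i)) as [(j & Hj & e & ->)|[off _]].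
        -- injection e. intros. f_equal. lia.
        -- exfalso. apply (off i); [lia | reflexivity].
Qed.

Theorem mainTheorem10 (k : nat) (D : NewtonDiagram2)
  (hlow : forall a b : nat, (a + b < k)%nat ->
            D (Z.of_nat a, Z.of_nat b) <> Zero)
  (hk : exists a b : nat, (a + b = k)%nat /\
            D (Z.of_nat a, Z.of_nat b) <> Zero) :
  exists Dt : NewtonDiagram2,
    (forall p, D p <> Zero -> Dt p = D p) /\
    (forall a b : nat, (a + b = k)%nat -> Dt (Z.of_nat a, Z.of_nat b) <> Zero) /\
    (forall p, Dt p <> Zero -> D p = Zero -> (fst p + snd p = Z.of_nat k)%Z) /\
    Qle (SC Dt) (SC D).
Proof.
  destruct (Nat.eq_dec k 0) as [-> | k_pos].
  { (* the 0-th antidiagonal is the origin, already in the support *)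
    exists D. split; [auto|]. split; [|split; [congruence | apply Qle_refl]].
    intros a b Hab. destruct hk as (a' & b' & Hab' & Dab).
    replace a with a' by lia. replace b with b' by lia. exact Dab. }
  destruct (diagonal_fill_exists k D k_pos hlow hk) as (y & y_ok & strip_le).
  assert (y_nz : forall i, (i <= k)%nat -> y i <> Zero) by (intros; apply y_ok; auto).
  destruct (fill_diag_diagram D k y y_nz) as (Dt & Dt_fun & Dt_bnd).
  exists Dt. rewrite Dt_fun. split; [|split; [|split]].
  - apply fill_diag_extends. intros i Hi. apply y_ok, Hi.
  - apply fill_diag_covers, y_nz.
  - apply fill_diag_new_on_diag.
  - apply SC_le_of_total_weight. rewrite Dt_fun, Dt_bnd.
    rewrite (total_weight_enlarge D (nd_bnd D + k + 1)) by lia.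
    pose proof (total_weight_local_change k D (fill_diag D k y) (nd_bnd D + k + 1)
                  ltac:(lia) (fun p off => eq_sym (fill_diag_off D k y p off))).
    lia.
Qed.
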